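(* Let $\mathcal D=\{d_1,\dots,d_s\}$ and $\mathcal H=\{h_1,\dots,h_n\}$ be finite sets, each $h_i$ a probability distribution $\mathbb P[\cdot\mid h_i]$ on $\mathcal D$, and let $\bm p=(p_1,\dots,p_n)$ be a prior on $\mathcal H$ with all $p_i>0$. Let $m_1,m_2,\dots$ be positive integers and for each $t\ge1$ let $P^{|t}$ be the $n\times n$ matrix $$P^{|t}_{ij}=\sum_{\mathbf d\in\mathcal D^{m_t}}\frac{\mathbb P[\mathbf d\mid h_i]\,\mathbb P[\mathbf d\mid h_j]\,p_j}{\sum_{k=1}^n\mathbb P[\mathbf d\mid h_k]\,p_k},$$ where $\mathbb P[(x_1,\dots,x_m)\mid h]=\prod_{k=1}^m\mathbb P[x_k\mid h]$. Let $P^{\le t}=P^{|1}P^{|2}\cdots P^{|t}$ and ${\tt d}_1=\min_{j\ne1}d_{RS}(\mathbb P[\cdot\mid h_1],\mathbb P[\cdot\mid h_j])$. Then for every $t\ge1$, $$\sum_{j=2}^nP^{\le t}_{1j}\le\frac12\sqrt{\frac{n(1-p_1)}{p_1}}\sum_{s=1}^te^{-\frac12{\tt d}_1^2m_s}.$$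
   Context: Root-sine distance: for probability vectors $\bm a,\bm b$ on $\mathcal D$, $d_{RS}(\bm a,\bm b)=\sqrt{1-\bigl(\sum_{i=1}^s\sqrt{a_ib_i}\bigr)^2}$. *)

From mathcomp Require Import all_boot all_order all_algebra.
From mathcomp Require Import reals sequences exp.
Set Implicit Arguments. Unset Strict Implicit. Unset Printing Implicit Defensive.
Import Order.TTheory GRing.Theory Num.Theory.
Local Open Scope ring_scope.

(* Hypotheses h_1,...,h_{n+1} indexed by 'I_n.+1 (h_1 = ord0);
   data space D = 'I_s;  Pl h x = P[x | h]. *)

Definition dRS (R : realType) (s : nat) (a b : 'I_s -> R) : R :=
  Num.sqrt (1 - (\sum_(i < s) Num.sqrt (a i * b i)) ^+ 2).

Definition seq_lik (R : realType) (N s m : nat) (Pl : 'I_N -> 'I_s -> R)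
    (h : 'I_N) (d : m.-tuple 'I_s) : R :=
  \prod_(k < m) Pl h (tnth d k).

Definition Pround (R : realType) (N s : nat) (Pl : 'I_N -> 'I_s -> R)
    (p : 'I_N -> R) (m : nat) : 'M[R]_N :=
  \matrix_(i, j) \sum_(d : m.-tuple 'I_s)
     (seq_lik Pl i d * seq_lik Pl j d * p j /
      \sum_(k < N) seq_lik Pl k d * p k).

Definition Pupto (R : realType) (n s : nat) (Pl : 'I_n.+1 -> 'I_s -> R)
    (p : 'I_n.+1 -> R) (m : nat -> nat) (t : nat) : 'M[R]_n.+1 :=
  \prod_(1 <= k < t.+1) Pround Pl p (m k).

(* d_1 = min_{j <> 1} d_RS(P[.|h_1], P[.|h_j]); the empty min (single
   hypothesis) is taken to be 1, the maximal value of d_RS. *)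
Definition dmin1 (R : realType) (n s : nat) (Pl : 'I_n.+1 -> 'I_s -> R) : R :=
  \big[Order.min/1]_(j < n.+1 | j != ord0) dRS (Pl ord0) (Pl j).

From mathcomp Require Import all_boot all_order all_algebra.
From mathcomp Require Import reals sequences exp.
From mathcomp Require Import ring lra.
Import Order.TTheory GRing.Theory Num.Theory.
Set Implicit Arguments. Unset Strict Implicit. Unset Printing Implicit Defensive.
Local Open Scope ring_scope.

(* Every round matrix is row-stochastic, and for row-stochastic matrices
   1 - (AB)_11 <= (1 - A_11) + (1 - B_11); hence the off-diagonal mass of the
   first row of P^{<=t} is at most the sum over rounds of the off-diagonal mass
   of the first row of P^{|s}.  In a single round, AM-GM applied to the
   denominator p_1 P[d|h_1] + p_j P[d|h_j] bounds the (1,j) entry by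
   sqrt(p_j) / (2 sqrt(p_1)) times BC^{m_s}, where BC = sum_x sqrt(P[x|h_1] P[x|h_j])
   is the Bhattacharyya coefficient, BC = sqrt(1 - d_RS^2) <= exp(-d_RS^2 / 2).
   Finally Cauchy-Schwarz gives sum_{j<>1} sqrt(p_j) <= sqrt(n (1 - p_1)). *)

Section RowStochastic.
Variables (R : numDomainType) (n : nat).

Definition row_stochastic (A : 'M[R]_n) :=
  (forall i j, 0 <= A i j) /\ (forall i, \sum_j A i j = 1).

Lemma row_stochastic_le1 (A : 'M[R]_n) i j : row_stochastic A -> A i j <= 1.
Proof.
move=> [A_ge0 A_sum1]; rewrite -(A_sum1 i) (bigD1 j) //= lerDl.
exact: sumr_ge0.
Qed.

Lemma row_stochastic_offdiag (A : 'M[R]_n) i :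
  row_stochastic A -> \sum_(j | j != i) A i j = 1 - A i i.
Proof.
by move=> [_ A_sum1]; rewrite -(A_sum1 i) [in RHS](bigD1 i) //= addrAC subrr add0r.
Qed.

Lemma row_stochastic1 : row_stochastic 1.
Proof.
split=> [i j|i]; first by rewrite mxE ler0n.
rewrite (bigD1 i) //= big1 ?addr0 => [|j]; first by rewrite mxE eqxx.
by rewrite mxE eq_sym => /negbTE ->.
Qed.

Lemma row_stochasticM (A B : 'M[R]_n) :
  row_stochastic A -> row_stochastic B -> row_stochastic (A *m B).
Proof.
move=> [A_ge0 A_sum1] [B_ge0 B_sum1]; split=> [i j|i].
  by rewrite mxE; apply: sumr_ge0 => k _; apply: mulr_ge0.
under eq_bigr do rewrite mxE.
rewrite exchange_big /= -(A_sum1 i); apply: eq_bigr => k _.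
by rewrite -mulr_sumr B_sum1 mulr1.
Qed.

Lemma diag_defectM (A B : 'M[R]_n) i :
  row_stochastic A -> row_stochastic B ->
  1 - (A *m B) i i <= (1 - A i i) + (1 - B i i).
Proof.
move=> A_st B_st; have [A_ge0 _] := A_st; have [B_ge0 _] := B_st.
have AB_ge : A i i * B i i <= (A *m B) i i.
  by rewrite mxE (bigD1 i) //= lerDl; apply: sumr_ge0 => k _; apply: mulr_ge0.
apply: (@le_trans _ _ (1 - A i i * B i i)); first by rewrite lerD2l lerN2.
rewrite -subr_ge0 (_ : _ - _ = (1 - A i i) * (1 - B i i)); last by ring.
by apply: mulr_ge0; rewrite subr_ge0 row_stochastic_le1.
Qed.

Lemma row_stochastic_prod (I : Type) (r : seq I) (P : pred I) (A : I -> 'M[R]_n) :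
  (forall k, P k -> row_stochastic (A k)) ->
  row_stochastic (\prod_(k <- r | P k) A k).
Proof.
move=> A_st; apply: big_ind => [|B C|k /A_st] //; first exact: row_stochastic1.
by rewrite -mulmxE; exact: row_stochasticM.
Qed.

Lemma diag_defect_prod (I : Type) (r : seq I) (P : pred I) (A : I -> 'M[R]_n) i :
  (forall k, P k -> row_stochastic (A k)) ->
  1 - (\prod_(k <- r | P k) A k) i i <= \sum_(k <- r | P k) (1 - A k i i).
Proof.
move=> A_st; elim: r => [|k r IH]; first by rewrite !big_nil mxE eqxx subrr.
rewrite !big_cons; case: ifP => // Pk; rewrite -mulmxE.
apply: le_trans (diag_defectM i (A_st k Pk) (row_stochastic_prod r A_st)) _.
by rewrite lerD2l.
Qed.

End RowStochastic.

Lemma sum_tuple_prod (R : comPzSemiRingType) (I : finType) m (F : I -> R) :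
  \sum_(d : m.-tuple I) \prod_(k < m) F (tnth d k) = (\sum_x F x) ^+ m.
Proof.
have -> : (\sum_x F x) ^+ m = \prod_(k < m) \sum_x F x by rewrite prodr_const card_ord.
rewrite (bigA_distr_bigA (fun _ x => F x)) /=.
rewrite (reindex (fun d : m.-tuple I => [ffun k => tnth d k])) /=.
  by apply: eq_bigr => d _; apply: eq_bigr => k _; rewrite ffunE.
exists (fun f : {ffun 'I_m -> I} => [tuple f k | k < m]) => [d _|f _].
  by apply: eq_from_tnth => k; rewrite tnth_mktuple ffunE.
by apply/ffunP => k; rewrite ffunE tnth_mktuple.
Qed.

Lemma prodr_sqrt (R : rcfType) (I : Type) (r : seq I) (P : pred I) (F : I -> R) :
  (forall i, P i -> 0 <= F i) ->
  \prod_(i <- r | P i) Num.sqrt (F i) = Num.sqrt (\prod_(i <- r | P i) F i).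
Proof.
move=> F_ge0; have -> : \prod_(i <- r | P i) F i = (\prod_(i <- r | P i) Num.sqrt (F i)) ^+ 2.
  by rewrite -prodrXl; apply: eq_bigr => i Pi; rewrite sqr_sqrtr ?F_ge0.
by rewrite sqrtr_sqr ger0_norm // prodr_ge0 // => i _; rewrite sqrtr_ge0.
Qed.

Lemma sqrt_AGM2 (R : rcfType) (x y : R) :
  0 <= x -> 0 <= y -> 2 * Num.sqrt (x * y) <= x + y.
Proof.
move=> x_ge0 y_ge0; rewrite sqrtrM //.
have := sqr_ge0 (Num.sqrt x - Num.sqrt y).
by rewrite sqrrB !sqr_sqrtr // -mulr_natr; lra.
Qed.

Lemma sqr_sum_le_card (R : realDomainType) (I : finType) (P : pred I) (y : I -> R) :
  (\sum_(i | P i) y i) ^+ 2 <= #|P|%:R * \sum_(i | P i) y i ^+ 2.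
Proof.
rewrite -(ler_pM2l (ltr0Sn R 1)).
have -> : 2 * (\sum_(i | P i) y i) ^+ 2 = \sum_(i | P i) \sum_(j | P j) 2 * (y i * y j).
  by rewrite expr2 mulr_suml mulr_sumr; apply: eq_bigr => i _; rewrite !mulr_sumr.
have -> : 2 * (#|P|%:R * \sum_(i | P i) y i ^+ 2) =
          \sum_(i | P i) \sum_(j | P j) (y i ^+ 2 + y j ^+ 2).
  symmetry; under eq_bigr do rewrite big_split /= sumr_const.
  by rewrite big_split /= sumr_const sumrMnl -mulr_natl; ring.
apply: ler_sum => i _; apply: ler_sum => j _.
by have := sqr_ge0 (y i - y j); rewrite sqrrB -mulr_natr; lra.
Qed.

Lemma sum_sqrt_le_card (R : rcfType) (I : finType) (P : pred I) (x : I -> R) :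
  (forall i, P i -> 0 <= x i) ->
  \sum_(i | P i) Num.sqrt (x i) <= Num.sqrt (#|P|%:R * \sum_(i | P i) x i).
Proof.
move=> x_ge0.
have S_ge0 : 0 <= \sum_(i | P i) Num.sqrt (x i) by apply: sumr_ge0 => i _; apply: sqrtr_ge0.
rewrite -(ger0_norm S_ge0) -sqrtr_sqr ler_wsqrtr //.
apply: le_trans (sqr_sum_le_card _ _) _; rewrite ler_wpM2l //.
by apply: ler_sum => i Pi; rewrite sqr_sqrtr ?x_ge0.
Qed.

Lemma sqrt1B_le_expR (R : realType) (y : R) : Num.sqrt (1 - y) <= expR (- (2^-1 * y)).
Proof.
have -> : expR (- (2^-1 * y)) = Num.sqrt (expR (- y)).
  have -> : - y = 2%:R * - (2^-1 * y) by rewrite mulrN mulrA mulfV ?mul1r ?pnatr_eq0.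
  by rewrite expRM_natl sqrtr_sqr ger0_norm ?expR_ge0.
by apply: ler_wsqrtr; rewrite -[1 - y]/(1 + - y) expR_ge1Dx.
Qed.

Lemma mul_div_le_AGM (R : rcfType) (a b p q Z : R) :
  0 <= a -> 0 <= b -> 0 < p -> 0 < q -> p * a + q * b <= Z ->
  a * b * q / Z <= Num.sqrt q / (2 * Num.sqrt p) * Num.sqrt (a * b).
Proof.
move=> a_ge0 b_ge0 p_gt0 q_gt0 le_Z.
have [p_ge0 q_ge0] := (ltW p_gt0, ltW q_gt0).
have ab_ge0 : 0 <= a * b by apply: mulr_ge0.
set c := Num.sqrt q / (2 * Num.sqrt p) * Num.sqrt (a * b).
have c_ge0 : 0 <= c by rewrite /c !mulr_ge0 ?invr_ge0 ?mulr_ge0 ?sqrtr_ge0.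
have Z_ge0 : 0 <= Z by apply: le_trans le_Z; rewrite addr_ge0 // mulr_ge0.
have [->|Z_neq0] := eqVneq Z 0; first by rewrite invr0 mulr0.
rewrite ler_pdivrMr ?lt0r ?Z_neq0 //.
have -> : a * b * q = c * (2 * (Num.sqrt p * Num.sqrt q * Num.sqrt (a * b))).
  have sqrt_p_neq0 : Num.sqrt p != 0 by rewrite sqrtr_eq0 -ltNge.
  rewrite /c -{1}(sqr_sqrtr ab_ge0) -{1}(sqr_sqrtr q_ge0).
  by field.
rewrite ler_wpM2l //; apply: le_trans le_Z; rewrite -!sqrtrM ?mulr_ge0 //.
by rewrite [_ * (a * b)]mulrACA sqrt_AGM2 // mulr_ge0.
Qed.

Definition bhattacharyya (R : rcfType) (s : nat) (a b : 'I_s -> R) : R :=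
  \sum_(x < s) Num.sqrt (a x * b x).

Section Bhattacharyya.
Variables (R : realType) (s : nat) (a b : 'I_s -> R).
Hypotheses (a_ge0 : forall x, 0 <= a x) (b_ge0 : forall x, 0 <= b x).
Hypotheses (a_sum1 : \sum_(x < s) a x = 1) (b_sum1 : \sum_(x < s) b x = 1).

Lemma bhattacharyya_ge0 : 0 <= bhattacharyya a b.
Proof. by apply: sumr_ge0 => x _; apply: sqrtr_ge0. Qed.

Lemma bhattacharyya_le1 : bhattacharyya a b <= 1.
Proof.
rewrite -(ler_pM2l (ltr0Sn R 1)) mulr1 mulr_sumr.
apply: (@le_trans _ _ (\sum_(x < s) (a x + b x))).
  by apply: ler_sum => x _; apply: sqrt_AGM2.
by rewrite big_split /= a_sum1 b_sum1.
Qed.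

Lemma bhattacharyya_le_expR d :
  0 <= d -> d <= dRS a b -> bhattacharyya a b <= expR (- (2^-1 * d ^+ 2)).
Proof.
move=> d_ge0 le_d; apply: le_trans (sqrt1B_le_expR _).
have B_ge0 := bhattacharyya_ge0; have B_le1 := bhattacharyya_le1.
have dRS_sqr : dRS a b ^+ 2 = 1 - bhattacharyya a b ^+ 2.
  by rewrite /dRS sqr_sqrtr // subr_ge0 exprn_ile1.
have : d ^+ 2 <= dRS a b ^+ 2 by rewrite lerXn2r // nnegrE (le_trans d_ge0).
rewrite -(ger0_norm B_ge0) -sqrtr_sqr dRS_sqr => le_d2.
by apply: ler_wsqrtr; lra.
Qed.

End Bhattacharyya.

Section OneRound.
Variables (R : realType) (N s : nat) (Pl : 'I_N -> 'I_s -> R) (p : 'I_N -> R).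
Hypotheses (Pl_ge0 : forall i x, 0 <= Pl i x) (Pl_sum1 : forall i, \sum_(x < s) Pl i x = 1).
Hypothesis p_gt0 : forall i, 0 < p i.

Let p_ge0 i : 0 <= p i := ltW (p_gt0 i).

Definition evidence m (d : m.-tuple 'I_s) : R := \sum_(k < N) seq_lik Pl k d * p k.

Lemma seq_lik_ge0 m i (d : m.-tuple 'I_s) : 0 <= seq_lik Pl i d.
Proof. exact: prodr_ge0. Qed.

Lemma evidence_ge0 m (d : m.-tuple 'I_s) : 0 <= evidence d.
Proof. by apply: sumr_ge0 => k _; rewrite mulr_ge0 ?seq_lik_ge0. Qed.

Lemma sum_seq_lik m i : \sum_(d : m.-tuple 'I_s) seq_lik Pl i d = 1.
Proof. by rewrite sum_tuple_prod Pl_sum1 expr1n. Qed.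

Lemma evidence_ge_pair m i j (d : m.-tuple 'I_s) :
  i != j -> p i * seq_lik Pl i d + p j * seq_lik Pl j d <= evidence d.
Proof.
move=> neq_ij; rewrite /evidence (bigD1 i) //= (bigD1 j) 1?eq_sym //= addrA.
rewrite [seq_lik _ i _ * _]mulrC [seq_lik _ j _ * _]mulrC lerDl.
by apply: sumr_ge0 => k _; rewrite mulr_ge0 ?seq_lik_ge0.
Qed.

(* Also when the evidence vanishes (x / 0 = 0): then seq_lik Pl i d = 0. *)
Lemma seq_lik_mulKevidence m i (d : m.-tuple 'I_s) :
  seq_lik Pl i d * evidence d / evidence d = seq_lik Pl i d.
Proof.
have [ev0|ev_neq0] := eqVneq (evidence d) 0; last by rewrite mulfK.
have : p i * seq_lik Pl i d <= evidence d.
  rewrite /evidence (bigD1 i) //= mulrC lerDl.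
  by apply: sumr_ge0 => k _; rewrite mulr_ge0 ?seq_lik_ge0.
rewrite ev0 invr0 mulr0 pmulr_rle0 // => lik_le0.
by apply/esym/eqP; rewrite eq_le lik_le0 seq_lik_ge0.
Qed.

Lemma Pround_row_stochastic m : row_stochastic (Pround Pl p m).
Proof.
split=> [i j|i].
  rewrite mxE; apply: sumr_ge0 => d _.
  by rewrite divr_ge0 ?mulr_ge0 ?seq_lik_ge0 // -/(evidence d) evidence_ge0.
under eq_bigr do rewrite mxE.
rewrite exchange_big /= -(sum_seq_lik m i); apply: eq_bigr => d _.
rewrite -[RHS](seq_lik_mulKevidence i d) /evidence mulr_sumr mulr_suml.
by apply: eq_bigr => j _; rewrite mulrA.
Qed.

Lemma Pround_le_bhattacharyya m i j : i != j ->
  Pround Pl p m i j <=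
  Num.sqrt (p j) / (2 * Num.sqrt (p i)) * bhattacharyya (Pl i) (Pl j) ^+ m.
Proof.
move=> neq_ij; rewrite mxE /bhattacharyya -sum_tuple_prod mulr_sumr.
apply: ler_sum => d _; rewrite prodr_sqrt => [|k _]; last exact: mulr_ge0.
rewrite big_split /=; apply: mul_div_le_AGM; rewrite ?seq_lik_ge0 //.
exact: evidence_ge_pair.
Qed.

End OneRound.

Section FirstHypothesis.
Variables (R : realType) (n s : nat) (Pl : 'I_n.+1 -> 'I_s -> R) (p : 'I_n.+1 -> R).
Hypotheses (Pl_ge0 : forall i x, 0 <= Pl i x) (Pl_sum1 : forall i, \sum_(x < s) Pl i x = 1).
Hypotheses (p_gt0 : forall i, 0 < p i) (p_sum1 : \sum_(i < n.+1) p i = 1).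

Lemma dmin1_ge0 : 0 <= dmin1 Pl.
Proof.
apply: (big_ind (fun x => 0 <= x)) => // [x y x_ge0 y_ge0|j _].
  by rewrite le_min x_ge0 y_ge0.
exact: sqrtr_ge0.
Qed.

Lemma dmin1_le j : j != ord0 -> dmin1 Pl <= dRS (Pl ord0) (Pl j).
Proof. by move=> j_neq0; rewrite /dmin1 (bigD1 j) //= ge_min lexx. Qed.

Let p_ge0 i : 0 <= p i := ltW (p_gt0 i).

Lemma prior_offdiag : \sum_(j | j != ord0) p j = 1 - p ord0.
Proof. by rewrite -p_sum1 [in RHS](bigD1 ord0) //= addrAC subrr add0r. Qed.

Lemma sum_sqrt_prior_le :
  \sum_(j | j != ord0) Num.sqrt (p j) <= Num.sqrt ((n.+1)%:R * (1 - p ord0)).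
Proof.
have one_sub_p0_ge0 : 0 <= 1 - p ord0 by rewrite -prior_offdiag sumr_ge0.
apply: le_trans (sum_sqrt_le_card _) _ => [j _|]; first exact: p_ge0.
rewrite prior_offdiag ler_wsqrtr // ler_wpM2r // ler_nat.
by apply: leq_trans (max_card _) _; rewrite card_ord.
Qed.

Lemma Pround_offdiag_le m :
  \sum_(j | j != ord0) Pround Pl p m ord0 j <=
  2^-1 * Num.sqrt ((n.+1)%:R * (1 - p ord0) / p ord0) *
  expR (- (2^-1 * dmin1 Pl ^+ 2 * m%:R)).
Proof.
set E := expR _; have E_ge0 : 0 <= E := expR_ge0 _.
have bhattacharyya_le j : j != ord0 -> bhattacharyya (Pl ord0) (Pl j) ^+ m <= E.
  move=> j_neq0; rewrite /E [_ * m%:R]mulrC -mulrN expRM_natl.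
  rewrite lerXn2r ?nnegrE ?expR_ge0 ?bhattacharyya_ge0 //.
  by apply: bhattacharyya_le_expR; rewrite ?dmin1_ge0 ?dmin1_le.
have c_ge0 : 0 <= (2 * Num.sqrt (p ord0))^-1 by rewrite invr_ge0 mulr_ge0 ?sqrtr_ge0.
apply: (@le_trans _ _ (\sum_(j | j != ord0) Num.sqrt (p j) / (2 * Num.sqrt (p ord0)) * E)).
  apply: ler_sum => j j_neq0.
  have neq_0j : ord0 != j by rewrite eq_sym.
  apply: le_trans (Pround_le_bhattacharyya Pl_ge0 p_gt0 m neq_0j) _.
  by rewrite ler_wpM2l ?bhattacharyya_le // mulr_ge0 ?sqrtr_ge0.
have -> : 2^-1 * Num.sqrt ((n.+1)%:R * (1 - p ord0) / p ord0) =
          Num.sqrt ((n.+1)%:R * (1 - p ord0)) / (2 * Num.sqrt (p ord0)).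
  by rewrite sqrtrM ?mulr_ge0 -?prior_offdiag ?sumr_ge0 // sqrtrV // invfM; ring.
rewrite -mulr_suml -mulr_suml; apply: ler_wpM2r => //.
by apply: ler_wpM2r => //; exact: sum_sqrt_prior_le.
Qed.

End FirstHypothesis.

Unset Implicit Arguments.
Set Strict Implicit.

Theorem lemma1 (R : realType) (n s : nat) (Pl : 'I_n.+1 -> 'I_s -> R)
    (p : 'I_n.+1 -> R) (m : nat -> nat)
    (HPl0 : forall i x, 0 <= Pl i x)
    (HPl1 : forall i, \sum_(x < s) Pl i x = 1)
    (Hp0 : forall i, 0 < p i)
    (Hp1 : \sum_(i < n.+1) p i = 1)
    (Hm : forall t, (1 <= t)%N -> (0 < m t)%N)
    (t : nat) (Ht : (1 <= t)%N) :
  \sum_(j < n.+1 | j != ord0) Pupto Pl p m t ord0 j <=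
  2^-1 * Num.sqrt ((n.+1)%:R * (1 - p ord0) / p ord0) *
  \sum_(1 <= k < t.+1) expR (- (2^-1 * dmin1 Pl ^+ 2 * (m k)%:R)).
Proof.
have rounds_st k : true -> row_stochastic (Pround Pl p (m k)).
  by move=> _; apply: Pround_row_stochastic.
rewrite row_stochastic_offdiag; last exact: row_stochastic_prod.
apply: le_trans (diag_defect_prod _ _ rounds_st) _.
rewrite mulr_sumr; apply: ler_sum => k _.
rewrite -row_stochastic_offdiag; first exact: Pround_offdiag_le.
exact: Pround_row_stochastic.
Qed.
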